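(* Let $\alpha>0$ and let $W\in\mathbb{R}^{\mathcal{Q}\times\mathcal{X}}$ be a symmetric workload matrix, written $W=(W^+,W^-)$ with $W^+\in\mathbb{R}^{\mathcal{Q}\times\mathcal{X}^+}$. Then $\gamma_2(W)=\gamma_2(W^+)$ and $\gamma_2(W,\alpha)=\gamma_2(W^+,\alpha)$. Moreover, if for some $U^+\in\mathbb{R}^{\mathcal{Q}\times\mathcal{X}^+}$ \[ \gamma_2(W^+,\alpha)=\frac{W^+\bullet U^+-\alpha\|U^+\|_1}{\gamma_2^*(U^+)}, \] then \[ \gamma_2(W,\alpha)=\frac{W\bullet U-\alpha\|U\|_1}{\gamma_2^*(U)}, \] where $U=\frac12(U^+,U^-)\in\mathbb{R}^{\mathcal{Q}\times\mathcal{X}}$ and the submatrix $U^-$, indexed by $\mathcal{X}^-$, has entries $u^-_{q,-x}=-u^+_{q,x}$ for all $x\in\mathcal{X}^+$, $q\in\mathcal{Q}$.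
   Context: $W$ is symmetric if $\mathcal{X}$ is partitioned into $\mathcal{X}^+,\mathcal{X}^-$ with a bijection $x\mapsto-x$ from $\mathcal{X}^+$ to $\mathcal{X}^-$ such that $w_{q,-x}=-w_{q,x}$ for all $q$ and $x\in\mathcal{X}^+$; $W^+,W^-$ are the column restrictions to $\mathcal{X}^+,\mathcal{X}^-$. $M\bullet N=\sum m_{i,j}n_{i,j}$, $\|U\|_1=\sum|u_{i,j}|$. For matrices, $\|M\|_{1\to2}$ = max column $\ell_2$ norm, $\|M\|_{2\to\infty}$ = max row $\ell_2$ norm, $\|M\|_{1\to\infty}$ = max absolute entry; $\gamma_2(M)=\min\{\|R\|_{2\to\infty}\|A\|_{1\to2}:RA=M\}$, $\gamma_2(W,\alpha)=\min\{\gamma_2(\widetilde W):\|W-\widetilde W\|_{1\to\infty}\le\alpha/2\}$, and $\gamma_2^*(U)=\max\{U\bullet V:\gamma_2(V)\le1\}$. *)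

From mathcomp Require Import all_boot all_order all_algebra.
From mathcomp Require Import boolp classical_sets reals.
Set Implicit Arguments. Unset Strict Implicit. Unset Printing Implicit Defensive.
Import Order.TTheory GRing.Theory Num.Theory.
Local Open Scope ring_scope.
Local Open Scope classical_set_scope.

Section Gamma2.
Variable R : realType.

Definition norm2inf m n (M : 'M[R]_(m, n)) : R :=
  \big[Num.max/0]_(i < m) Num.sqrt (\sum_(j < n) M i j ^+ 2).

Definition norm12 m n (M : 'M[R]_(m, n)) : R :=
  \big[Num.max/0]_(j < n) Num.sqrt (\sum_(i < m) M i j ^+ 2).

Definition norm1inf m n (M : 'M[R]_(m, n)) : R :=
  \big[Num.max/0]_(i < m) \big[Num.max/0]_(j < n) `|M i j|.

Definition entry_norm1 m n (U : 'M[R]_(m, n)) : R :=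
  \sum_(i < m) \sum_(j < n) `|U i j|.

Definition mdot m n (M N : 'M[R]_(m, n)) : R :=
  \sum_(i < m) \sum_(j < n) M i j * N i j.

Definition gamma2 m n (M : 'M[R]_(m, n)) : R :=
  inf [set c | exists k (Rm : 'M[R]_(m, k)) (A : 'M[R]_(k, n)),
                 Rm *m A = M /\ c = norm2inf Rm * norm12 A].

Definition gamma2_approx m n (W : 'M[R]_(m, n)) (alpha : R) : R :=
  inf [set c | exists Wt : 'M[R]_(m, n),
                 norm1inf (W - Wt) <= alpha / 2 /\ c = gamma2 Wt].

Definition gamma2_dual m n (U : 'M[R]_(m, n)) : R :=
  sup [set c | exists V : 'M[R]_(m, n), gamma2 V <= 1 /\ c = mdot U V].

End Gamma2.

(* Write S = (I, -I) and L = (I; 0), so that W = Wp S and Wp = W L, and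
   likewise U = Up (S^T / 2)^T and Up = U S^T.  The matrices S, L and S^T / 2
   have columns of l1-norm at most 1, and right multiplication by such a
   matrix does not increase ||.||_{1->2} (Jensen for the square, row by row)
   nor ||.||_{1->oo}.  Hence it does not increase gamma_2 or gamma_2(., alpha),
   and transporting test matrices V |-> V B shows that the value sets defining
   gamma_2^* coincide for U and Up. *)

From mathcomp Require Import all_boot all_order all_algebra.
From mathcomp Require Import boolp classical_sets reals.
From mathcomp Require Import lra.
Set Implicit Arguments. Unset Strict Implicit. Unset Printing Implicit Defensive.
Import Order.TTheory GRing.Theory Num.Theory.
Local Open Scope ring_scope.
Local Open Scope classical_set_scope.

Section Gamma2Contractions.
Variable R : realType.

Lemma inf_le_dominated (A B : set R) :
  B !=set0 -> (forall x, A x -> 0 <= x) ->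
  (forall y, B y -> exists2 x, A x & x <= y) -> inf A <= inf B.
Proof.
move=> [b Bb] A_ge0 dom; apply: lb_le_inf; first by exists b.
move=> y /dom [x Ax le_xy]; apply: le_trans le_xy.
by apply: ge_inf => //; exists 0 => z /A_ge0.
Qed.

Lemma sqrtr_le_sqr (x c : R) : 0 <= c -> x <= c ^+ 2 -> Num.sqrt x <= c.
Proof.
by move=> c_ge0 /ler_wsqrtr /le_trans; apply; rewrite sqrtr_sqr ger0_norm.
Qed.

Lemma norm12_ge0 k n (A : 'M[R]_(k, n)) : 0 <= norm12 A.
Proof. exact: bigmax_ge_id. Qed.

Lemma norm2inf_ge0 k n (A : 'M[R]_(k, n)) : 0 <= norm2inf A.
Proof. exact: bigmax_ge_id. Qed.

Lemma norm1inf_ge0 k n (A : 'M[R]_(k, n)) : 0 <= norm1inf A.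
Proof. exact: bigmax_ge_id. Qed.

Lemma norm12_le k n (A : 'M[R]_(k, n)) c : 0 <= c ->
  (forall j, \sum_i A i j ^+ 2 <= c ^+ 2) -> norm12 A <= c.
Proof. by move=> c_ge0 le_colA; apply: bigmax_le => // j _; apply: sqrtr_le_sqr. Qed.

Lemma sum_col_sqr_le_norm12 k n (A : 'M[R]_(k, n)) j :
  \sum_i A i j ^+ 2 <= norm12 A ^+ 2.
Proof.
have col_ge0 : 0 <= \sum_i A i j ^+ 2 by apply: sumr_ge0 => i _; apply: sqr_ge0.
rewrite -(sqr_sqrtr col_ge0) lerXn2r ?nnegrE ?sqrtr_ge0 ?norm12_ge0 //.
exact: (le_bigmax _ (fun j => Num.sqrt (\sum_i A i j ^+ 2))).
Qed.

Lemma norm1inf_le k n (A : 'M[R]_(k, n)) c : 0 <= c ->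
  (forall i j, `|A i j| <= c) -> norm1inf A <= c.
Proof. by move=> c_ge0 le_A; apply: bigmax_le => // i _; apply: bigmax_le. Qed.

Lemma entry_le_norm1inf k n (A : 'M[R]_(k, n)) i j : `|A i j| <= norm1inf A.
Proof.
apply: le_trans (le_bigmax _ (fun i => \big[Num.max/0]_j `|A i j|) i).
exact: (le_bigmax _ (fun j => `|A i j|)).
Qed.

Lemma mulr_le_half_sqr (a b w : R) :
  a * w * b <= `|w| * (2^-1 * (a ^+ 2 + b ^+ 2)).
Proof.
apply: le_trans (ler_norm _) _.
rewrite mulrC mulrA !normrM [_ * `|w|]mulrC ler_wpM2l //.
have := sqr_ge0 (`|b| - `|a|).
rewrite sqrrB !real_normK ?num_real // mulr2n.
lra.
Qed.

Lemma sqr_sum_le k (x w : 'I_k -> R) : \sum_l `|w l| <= 1 ->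
  (\sum_l x l * w l) ^+ 2 <= \sum_l `|w l| * x l ^+ 2.
Proof.
move=> w_le1; set t := \sum_l x l * w l; set S := \sum_l `|w l| * x l ^+ 2.
(* t^2 = sum_l x_l w_l t <= sum_l |w_l| (x_l^2 + t^2) / 2 <= (S + t^2) / 2 *)
suff : t ^+ 2 <= 2^-1 * (S + t ^+ 2) by lra.
rewrite {1}(_ : t ^+ 2 = \sum_l x l * w l * t); last by rewrite expr2 mulr_suml.
apply: le_trans (ler_sum _ (fun l _ => mulr_le_half_sqr (x l) t (w l))) _.
under eq_bigr do rewrite mulrCA mulrDr.
rewrite -mulr_sumr big_split /= -mulr_suml ler_pM2l ?invr_gt0 // lerD2l.
exact: ler_piMl (sqr_ge0 _) w_le1.
Qed.

Definition col_abs_sum_le1 n n' (B : 'M[R]_(n, n')) :=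
  forall j, \sum_k `|B k j| <= 1.

Lemma norm12_mulmx_le p n n' (A : 'M[R]_(p, n)) (B : 'M[R]_(n, n')) :
  col_abs_sum_le1 B -> norm12 (A *m B) <= norm12 A.
Proof.
move=> B_le1; apply: norm12_le (norm12_ge0 A) _ => j.
apply: (@le_trans _ _ (\sum_i \sum_k `|B k j| * A i k ^+ 2)).
  by apply: ler_sum => i _; rewrite mxE; apply: sqr_sum_le.
rewrite exchange_big /=.
apply: (@le_trans _ _ (\sum_k `|B k j| * norm12 A ^+ 2)).
  by apply: ler_sum => k _; rewrite -mulr_sumr ler_wpM2l ?sum_col_sqr_le_norm12.
by rewrite -mulr_suml ler_piMl ?sqr_ge0.
Qed.

Lemma norm1inf_mulmx_le p n n' (A : 'M[R]_(p, n)) (B : 'M[R]_(n, n')) :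
  col_abs_sum_le1 B -> norm1inf (A *m B) <= norm1inf A.
Proof.
move=> B_le1; apply: norm1inf_le (norm1inf_ge0 A) _ => i j.
rewrite mxE; apply: le_trans (ler_norm_sum _ _ _) _.
apply: (@le_trans _ _ (\sum_k `|B k j| * norm1inf A)).
  by apply: ler_sum => k _; rewrite normrM mulrC ler_wpM2l ?entry_le_norm1inf.
by rewrite -mulr_suml ler_piMl ?norm1inf_ge0.
Qed.

Lemma gamma2_ge0 k n (M : 'M[R]_(k, n)) : 0 <= gamma2 M.
Proof.
apply: lb_le_inf.
  by exists (norm2inf (1%:M : 'M[R]_k) * norm12 M), k, 1%:M, M; rewrite mul1mx.
by move=> _ [p [Rm [A [_ ->]]]]; rewrite mulr_ge0 ?norm12_ge0 ?norm2inf_ge0.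
Qed.

Lemma gamma2_mulmx_le k n n' (V : 'M[R]_(k, n)) (B : 'M[R]_(n, n')) :
  col_abs_sum_le1 B -> gamma2 (V *m B) <= gamma2 V.
Proof.
move=> B_le1; apply: inf_le_dominated.
- by exists (norm2inf (1%:M : 'M[R]_k) * norm12 V), k, 1%:M, V; rewrite mul1mx.
- by move=> _ [p [Rm [A [_ ->]]]]; rewrite mulr_ge0 ?norm12_ge0 ?norm2inf_ge0.
move=> _ [p [Rm [A [<- ->]]]]; exists (norm2inf Rm * norm12 (A *m B)).
  by exists p, Rm, (A *m B); rewrite mulmxA.
by rewrite ler_wpM2l ?norm2inf_ge0 ?norm12_mulmx_le.
Qed.

Lemma gamma2_approx_mulmx_le k n n' (W : 'M[R]_(k, n)) (B : 'M[R]_(n, n'))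
    (alpha : R) :
  0 <= alpha -> col_abs_sum_le1 B ->
  gamma2_approx (W *m B) alpha <= gamma2_approx W alpha.
Proof.
move=> alpha_ge0 B_le1; apply: inf_le_dominated.
- exists (gamma2 W), W; split=> //; rewrite subrr.
  by apply: norm1inf_le => [|i j]; rewrite ?mxE ?normr0 divr_ge0.
- by move=> _ [Wt [_ ->]]; apply: gamma2_ge0.
move=> _ [Wt [W_near ->]]; exists (gamma2 (Wt *m B)); last exact: gamma2_mulmx_le.
exists (Wt *m B); split=> //; rewrite -mulmxBl.
exact: le_trans (norm1inf_mulmx_le _ B_le1) W_near.
Qed.

Lemma mdotE k n (X Y : 'M[R]_(k, n)) : mdot X Y = \tr (X *m Y^T).
Proof. by apply: eq_bigr => i _; rewrite mxE; apply: eq_bigr => j _; rewrite !mxE. Qed.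

Lemma mdot_mulmx_tr k n n' (X : 'M[R]_(k, n)) (V : 'M[R]_(k, n'))
    (B : 'M[R]_(n', n)) :
  mdot X (V *m B) = mdot (X *m B^T) V.
Proof. by rewrite !mdotE trmx_mul mulmxA. Qed.

Lemma mdot_row_mx k n1 n2 (X1 Y1 : 'M[R]_(k, n1)) (X2 Y2 : 'M[R]_(k, n2)) :
  mdot (row_mx X1 X2) (row_mx Y1 Y2) = mdot X1 Y1 + mdot X2 Y2.
Proof. by rewrite !mdotE tr_row_mx mul_row_col mxtraceD. Qed.

Lemma mdotZr k n (X Y : 'M[R]_(k, n)) a : mdot X (a *: Y) = a * mdot X Y.
Proof. by rewrite !mdotE linearZ /= -scalemxAr mxtraceZ. Qed.

Lemma mdotNN k n (X Y : 'M[R]_(k, n)) : mdot (- X) (- Y) = mdot X Y.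
Proof. by rewrite !mdotE linearN /= mulNmx mulmxN opprK. Qed.

Lemma gamma2_dual_eq_mulmx_tr k n n' (X : 'M[R]_(k, n)) (Y : 'M[R]_(k, n'))
    (B : 'M[R]_(n, n')) (C : 'M[R]_(n', n)) :
  col_abs_sum_le1 B -> col_abs_sum_le1 C ->
  X = Y *m B^T -> Y = X *m C^T -> gamma2_dual X = gamma2_dual Y.
Proof.
have values_sub n1 n2 (X1 : 'M[R]_(k, n1)) (X2 : 'M[R]_(k, n2)) B1 :
    col_abs_sum_le1 B1 -> X1 = X2 *m B1^T ->
    [set c | exists V, gamma2 V <= 1 /\ c = mdot X1 V] `<=`
    [set c | exists V, gamma2 V <= 1 /\ c = mdot X2 V].
  move=> B1_le1 -> _ [V [V_le1 ->]]; exists (V *m B1).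
  by rewrite -mdot_mulmx_tr (le_trans (gamma2_mulmx_le _ B1_le1)).
move=> B_le1 C_le1 XE YE; rewrite /gamma2_dual; congr sup.
by apply/seteqP; split; [apply: values_sub XE | apply: values_sub YE].
Qed.

Lemma entry_norm1_row_mx k n1 n2 (X1 : 'M[R]_(k, n1)) (X2 : 'M[R]_(k, n2)) :
  entry_norm1 (row_mx X1 X2) = entry_norm1 X1 + entry_norm1 X2.
Proof.
rewrite /entry_norm1 -big_split; apply: eq_bigr => i _; rewrite big_split_ord.
by congr (_ + _); apply: eq_bigr => j _; rewrite (row_mxEl, row_mxEr).
Qed.

Lemma entry_norm1Z k n a (X : 'M[R]_(k, n)) :
  entry_norm1 (a *: X) = `|a| * entry_norm1 X.
Proof.
rewrite /entry_norm1 mulr_sumr; apply: eq_bigr => i _; rewrite mulr_sumr.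
by apply: eq_bigr => j _; rewrite mxE normrM.
Qed.

Lemma entry_norm1N k n (X : 'M[R]_(k, n)) : entry_norm1 (- X) = entry_norm1 X.
Proof. by rewrite -scaleN1r entry_norm1Z normrN1 mul1r. Qed.

Definition symmetrize_mx n : 'M[R]_(n, n + n) := row_mx 1%:M (- 1%:M).

Definition lblock_mx n : 'M[R]_(n + n, n) := col_mx 1%:M 0.

Lemma mul_symmetrize_mx k n (A : 'M[R]_(k, n)) :
  A *m symmetrize_mx n = row_mx A (- A).
Proof. by rewrite mul_mx_row mulmxN mulmx1. Qed.

Lemma mul_lblock_mx k n (A : 'M[R]_(k, n + n)) : A *m lblock_mx n = lsubmx A.
Proof. by rewrite -[A in A *m _]hsubmxK mul_row_col mulmx1 mulmx0 addr0. Qed.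

Lemma mul_symmetrize_mx_tr n :
  symmetrize_mx n *m (symmetrize_mx n)^T = 2%:M.
Proof.
by rewrite tr_row_mx mul_row_col linearN /= !trmx1 mulmxN mulNmx opprK !mulmx1 -raddfD.
Qed.

Lemma sum_abs_delta n (j : 'I_n) : \sum_k `|((k == j)%:R : R)| = 1.
Proof.
rewrite (bigD1 j) //= eqxx normr1 big1 ?addr0 // => k /negPf ->.
by rewrite normr0.
Qed.

Lemma symmetrize_mx_abs_sum n : col_abs_sum_le1 (symmetrize_mx n).
Proof.
move=> j; rewrite /symmetrize_mx -(splitK j); case: (split j) => j' /=.
  by under eq_bigr do rewrite row_mxEl mxE; rewrite sum_abs_delta.
by under eq_bigr do rewrite row_mxEr !mxE normrN; rewrite sum_abs_delta.
Qed.

Lemma lblock_mx_abs_sum n : col_abs_sum_le1 (lblock_mx n).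
Proof.
move=> j; rewrite /lblock_mx big_split_ord /=.
under eq_bigr do rewrite col_mxEu mxE.
under [X in _ + X]eq_bigr do rewrite col_mxEd mxE normr0.
by rewrite sum_abs_delta big1 ?addr0.
Qed.

Lemma half_tr_symmetrize_mx_abs_sum n :
  col_abs_sum_le1 (2^-1 *: (symmetrize_mx n)^T).
Proof.
move=> j; rewrite /symmetrize_mx big_split_ord /=.
under eq_bigr do rewrite 2!mxE row_mxEl mxE eq_sym normrM.
under [X in _ + X]eq_bigr do rewrite 2!mxE row_mxEr !mxE normrM normrN eq_sym.
by rewrite -!mulr_sumr sum_abs_delta ger0_norm; lra.
Qed.

End Gamma2Contractions.

Arguments symmetrize_mx {R} n.
Arguments lblock_mx {R} n.

Section SymmetricWorkload.
Variables (R : realType) (m n : nat).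

Lemma gamma2_row_mx_opp (Wp : 'M[R]_(m, n)) :
  gamma2 (row_mx Wp (- Wp)) = gamma2 Wp.
Proof.
apply/eqP; rewrite eq_le; apply/andP; split.
  by rewrite -{1}mul_symmetrize_mx; apply/gamma2_mulmx_le/symmetrize_mx_abs_sum.
rewrite -{1}(row_mxKl Wp (- Wp)) -mul_lblock_mx.
exact/gamma2_mulmx_le/lblock_mx_abs_sum.
Qed.

Lemma gamma2_approx_row_mx_opp (Wp : 'M[R]_(m, n)) (alpha : R) : 0 <= alpha ->
  gamma2_approx (row_mx Wp (- Wp)) alpha = gamma2_approx Wp alpha.
Proof.
move=> alpha_ge0; apply/eqP; rewrite eq_le; apply/andP; split.
  rewrite -{1}mul_symmetrize_mx.
  by apply: gamma2_approx_mulmx_le => //; apply: symmetrize_mx_abs_sum.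
rewrite -{1}(row_mxKl Wp (- Wp)) -mul_lblock_mx.
by apply: gamma2_approx_mulmx_le => //; apply: lblock_mx_abs_sum.
Qed.

Lemma gamma2_dual_half_row_mx_opp (Up : 'M[R]_(m, n)) :
  gamma2_dual (2^-1 *: row_mx Up (- Up)) = gamma2_dual Up.
Proof.
apply: gamma2_dual_eq_mulmx_tr.
- exact: half_tr_symmetrize_mx_abs_sum.
- exact: symmetrize_mx_abs_sum.
- by rewrite linearZ /= trmxK -scalemxAr -mul_symmetrize_mx.
rewrite -mul_symmetrize_mx -scalemxAl -mulmxA mul_symmetrize_mx_tr.
by rewrite mul_mx_scalar scalerA mulVf ?pnatr_eq0 // scale1r.
Qed.

Lemma mdot_half_row_mx_opp (Wp Up : 'M[R]_(m, n)) :
  mdot (row_mx Wp (- Wp)) (2^-1 *: row_mx Up (- Up)) = mdot Wp Up.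
Proof. rewrite mdotZr mdot_row_mx mdotNN; lra. Qed.

Lemma entry_norm1_half_row_mx_opp (Up : 'M[R]_(m, n)) :
  entry_norm1 (2^-1 *: row_mx Up (- Up)) = entry_norm1 Up.
Proof. by rewrite entry_norm1Z entry_norm1_row_mx entry_norm1N ger0_norm; lra. Qed.

End SymmetricWorkload.

Theorem lemma3p10 (R : realType) (alpha : R) (m n : nat) (Wp : 'M[R]_(m, n)) :
  0 < alpha ->
  let W : 'M[R]_(m, n + n) := row_mx Wp (- Wp) in
  gamma2 W = gamma2 Wp /\
  gamma2_approx W alpha = gamma2_approx Wp alpha /\
  (forall Up : 'M[R]_(m, n),
     gamma2_approx Wp alpha
       = (mdot Wp Up - alpha * entry_norm1 Up) / gamma2_dual Up ->
     let U : 'M[R]_(m, n + n) := (2^-1) *: row_mx Up (- Up) in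
     gamma2_approx W alpha
       = (mdot W U - alpha * entry_norm1 U) / gamma2_dual U).
Proof.
move=> alpha_gt0 W; have approxE := gamma2_approx_row_mx_opp Wp (ltW alpha_gt0).
split; first exact: gamma2_row_mx_opp.
split=> // Up optimal_Up U.
by rewrite approxE optimal_Up mdot_half_row_mx_opp entry_norm1_half_row_mx_opp
  gamma2_dual_half_row_mx_opp.
Qed.
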